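(* Let $\alpha$ be a unit speed Frenet curve in $\mathbb{E}^3$ with curvature $\kappa>0$ and torsion $\tau$, and let $\beta$ be an osculating mate of $\alpha$ with curvature $\bar\kappa$ and torsion $\bar\tau$. Then $$\kappa=\frac{\varepsilon_1\bar\kappa^2}{\bar\kappa^2+\bar\tau^2}\left(\frac{\bar\tau}{\bar\kappa}\right)',\qquad \tau=\pm\sqrt{\bar\kappa^2+\bar\tau^2}.$$
   Context: $\alpha:I\to\mathbb{E}^3$ is parametrized by arclength $s$, with Frenet frame $\{T,N,B\}$, $T'=\kappa N$, $N'=-\kappa T+\tau B$, $B'=-\tau N$. An osculating mate of $\alpha$ is a curve $\beta(s)=\int(x_1T+x_2N)ds$ with smooth $x_1,x_2$, $x_1^2+x_2^2=1$ and $\beta''\perp\mathrm{span}\{T,N\}$; $\beta$ is assumed to be a Frenet curve (nonvanishing curvature), unit speed in $s$, with Frenet apparatus $\{\bar T,\bar N,\bar B,\bar\kappa,\bar\tau\}$. Then $\beta'=\sin\theta\,T+\cos\theta\,N$ for an antiderivative $\theta=\int\kappa ds$ of $\kappa$, and $\varepsilon_1\in\{\pm1\}$ denotes the sign with $\varepsilon_1\tau\cos\theta>0$. The prime denotes $d/ds$. *)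

From Stdlib Require Import Reals.
From Coquelicot Require Import Coquelicot.
Open Scope R_scope.

Record vec3 := mkV { vx : R; vy : R; vz : R }.

Definition vadd (u v : vec3) : vec3 := mkV (vx u + vx v) (vy u + vy v) (vz u + vz v).
Definition vscal (a : R) (v : vec3) : vec3 := mkV (a * vx v) (a * vy v) (a * vz v).
Definition dot (u v : vec3) : R := vx u * vx v + vy u * vy v + vz u * vz v.
Definition cross (u v : vec3) : vec3 :=
  mkV (vy u * vz v - vz u * vy v) (vz u * vx v - vx u * vz v) (vx u * vy v - vy u * vx v).

Definition has_vderiv (f : R -> vec3) (s : R) (v : vec3) : Prop :=
  is_derive (fun t => vx (f t)) s (vx v) /\
  is_derive (fun t => vy (f t)) s (vy v) /\
  is_derive (fun t => vz (f t)) s (vz v).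

Definition is_open_interval (I : R -> Prop) : Prop :=
  (exists s, I s) /\
  (forall x, I x -> exists e, 0 < e /\ forall y, Rabs (y - x) < e -> I y) /\
  (forall x y z, I x -> I z -> x <= y -> y <= z -> I y).

Definition smooth_on (I : R -> Prop) (f : R -> R) : Prop :=
  forall n s, I s -> ex_derive_n f n s.

Definition pos_orthonormal (T N B : vec3) : Prop :=
  dot T T = 1 /\ dot N N = 1 /\ dot B B = 1 /\
  dot T N = 0 /\ dot T B = 0 /\ dot N B = 0 /\ B = cross T N.

Definition frenet_curve (I : R -> Prop) (c T N B : R -> vec3) (k t : R -> R) : Prop :=
  smooth_on I k /\ smooth_on I t /\
  forall s, I s ->
    has_vderiv c s (T s) /\
    has_vderiv T s (vscal (k s) (N s)) /\
    has_vderiv N s (vadd (vscal (- k s) (T s)) (vscal (t s) (B s))) /\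
    has_vderiv B s (vscal (- t s) (N s)) /\
    pos_orthonormal (T s) (N s) (B s) /\
    0 < k s.

From Stdlib Require Import Reals Lra Psatz.
From Coquelicot Require Import Coquelicot.
Open Scope R_scope.

(* Differentiating [beta' = sin theta T + cos theta N] with [theta' = kappa] kills the
   T and N components and leaves [beta'' = tau cos theta B].  Hence the principal normal
   of [beta] is [c B] with [c = tau cos theta / kb] a sign, so [c' = 0],
   [kb = |tau cos theta|] and, computing [Nb' . Bb], [tb = tau sin theta].  Then
   [tb / kb = c tan theta] has derivative [c kappa / cos^2 theta], and both formulas
   follow from [kb^2 + tb^2 = tau^2]. *)

Ltac vec3_ring :=
  repeat match goal with v : vec3 |- _ => destruct v end;
  unfold vadd, vscal, dot, cross; simpl;
  lazymatch goal with
  | |- mkV _ _ _ = mkV _ _ _ => f_equal; ring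
  | |- _ => ring
  end.

Lemma dot_addl (u v w : vec3) : dot (vadd u v) w = dot u w + dot v w.
Proof. vec3_ring. Qed.

Lemma dot_scall (a : R) (u v : vec3) : dot (vscal a u) v = a * dot u v.
Proof. vec3_ring. Qed.

Lemma dot_scalr (a : R) (u v : vec3) : dot u (vscal a v) = a * dot u v.
Proof. vec3_ring. Qed.

Lemma cross_scalr (a : R) (u v : vec3) : cross u (vscal a v) = vscal a (cross u v).
Proof. vec3_ring. Qed.

Lemma vscal_div (a b : R) (u v : vec3) :
  a <> 0 -> vscal a u = vscal b v -> u = vscal (b / a) v.
Proof.
  destruct u as [u1 u2 u3], v as [v1 v2 v3]; unfold vscal; simpl.
  intros Ha E; injection E as E1 E2 E3.
  f_equal; field_simplify_eq; auto; lra.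
Qed.

Lemma pos_orthonormal_dot_normal_cross (T N B : vec3) (a b : R) :
  pos_orthonormal T N B ->
  dot N (cross (vadd (vscal a T) (vscal b N)) B) = - a.
Proof.
  intros (HTT & HNN & _ & HTN & _ & _ & ->).
  transitivity ((a * dot T N + b * dot N N) * dot T N - (a * dot T T + b * dot T N) * dot N N).
  - vec3_ring.
  - rewrite HTT, HNN, HTN; ring.
Qed.

Lemma is_derive_Rmult (f g : R -> R) (x df dg : R) :
  is_derive f x df -> is_derive g x dg ->
  is_derive (fun t => f t * g t) x (df * g x + f x * dg).
Proof. intros Hf Hg; exact (is_derive_mult f g x df dg Hf Hg Rmult_comm). Qed.

Lemma is_derive_sin_comp (f : R -> R) (x df : R) :
  is_derive f x df -> is_derive (fun t => sin (f t)) x (cos (f x) * df).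
Proof.
  intros Hf; rewrite Rmult_comm.
  exact (is_derive_comp sin f x _ _ (is_derive_sin _) Hf).
Qed.

Lemma is_derive_cos_comp (f : R -> R) (x df : R) :
  is_derive f x df -> is_derive (fun t => cos (f t)) x (- sin (f x) * df).
Proof.
  intros Hf; rewrite Rmult_comm.
  exact (is_derive_comp cos f x _ _ (is_derive_cos _) Hf).
Qed.

Lemma is_derive_tan_comp (f : R -> R) (x df : R) :
  cos (f x) <> 0 -> is_derive f x df ->
  is_derive (fun t => tan (f t)) x ((tan (f x) ^ 2 + 1) * df).
Proof.
  intros Hcos Hf; rewrite Rmult_comm.
  exact (is_derive_comp tan f x _ _ (is_derive_tan _ Hcos) Hf).
Qed.

Lemma is_derive_ext_on (I : R -> Prop) (f g : R -> R) (x l : R) :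
  is_open_interval I -> I x -> (forall y, I y -> f y = g y) ->
  is_derive f x l -> is_derive g x l.
Proof.
  intros (_ & Hopen & _) Hx Hfg.
  apply is_derive_ext_loc.
  destruct (Hopen x Hx) as (e & He & Hball).
  exists (mkposreal e He); intros y Hy; apply Hfg, Hball, Hy.
Qed.

Lemma is_derive_sqr_one (I : R -> Prop) (f : R -> R) (x l : R) :
  is_open_interval I -> I x -> (forall y, I y -> f y ^ 2 = 1) ->
  is_derive f x l -> l = 0.
Proof.
  intros HI Hx Hf1 Hf.
  assert (Hff : is_derive (fun _ => 1) x (l * f x + f x * l)).
  { apply (is_derive_ext_on I (fun t => f t * f t)); auto.
    - intros y Hy; rewrite <- (Hf1 y Hy); ring.
    - apply is_derive_Rmult; exact Hf. }
  assert (H0 : l * f x + f x * l = 0)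
    by (rewrite <- (is_derive_unique _ _ _ Hff); apply Derive_const).
  specialize (Hf1 x Hx); nra.
Qed.

Lemma has_vderiv_unique (f : R -> vec3) (s : R) (u v : vec3) :
  has_vderiv f s u -> has_vderiv f s v -> u = v.
Proof.
  destruct u, v; intros (Hx & Hy & Hz) (Hx' & Hy' & Hz'); simpl in *.
  apply is_derive_unique in Hx, Hy, Hz, Hx', Hy', Hz'.
  congruence.
Qed.

Lemma has_vderiv_ext_on (I : R -> Prop) (f g : R -> vec3) (s : R) (v : vec3) :
  is_open_interval I -> I s -> (forall y, I y -> f y = g y) ->
  has_vderiv f s v -> has_vderiv g s v.
Proof.
  intros HI Hs Hfg (Hx & Hy & Hz).
  split; [|split].
  - apply (is_derive_ext_on I (fun t => vx (f t))); auto; intros y Hy'; rewrite Hfg; auto.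
  - apply (is_derive_ext_on I (fun t => vy (f t))); auto; intros y Hy'; rewrite Hfg; auto.
  - apply (is_derive_ext_on I (fun t => vz (f t))); auto; intros y Hy'; rewrite Hfg; auto.
Qed.

Lemma has_vderiv_add (f g : R -> vec3) (s : R) (u v : vec3) :
  has_vderiv f s u -> has_vderiv g s v ->
  has_vderiv (fun t => vadd (f t) (g t)) s (vadd u v).
Proof.
  intros (Hx & Hy & Hz) (Gx & Gy & Gz).
  split; [|split]; apply (is_derive_plus (V := R_NormedModule)); assumption.
Qed.

Lemma has_vderiv_scal (a : R -> R) (f : R -> vec3) (s da : R) (v : vec3) :
  is_derive a s da -> has_vderiv f s v ->
  has_vderiv (fun t => vscal (a t) (f t)) s (vadd (vscal da (f s)) (vscal (a s) v)).
Proof.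
  intros Ha (Hx & Hy & Hz).
  split; [|split]; apply is_derive_Rmult; assumption.
Qed.

Section OsculatingMate.

Context {I : R -> Prop} {alpha T N B beta Tb Nb Bb : R -> vec3}
  {kappa tau kb tb theta : R -> R}.

Hypothesis HI : is_open_interval I.
Hypothesis Halpha : frenet_curve I alpha T N B kappa tau.
Hypothesis Hbeta : frenet_curve I beta Tb Nb Bb kb tb.
Hypothesis Htheta : forall u, I u -> is_derive theta u (kappa u).
Hypothesis Hmate : forall u, I u ->
  has_vderiv beta u (vadd (vscal (sin (theta u)) (T u)) (vscal (cos (theta u)) (N u))).

Lemma rotated_tangent_deriv u : I u ->
  has_vderiv (fun v => vadd (vscal (sin (theta v)) (T v)) (vscal (cos (theta v)) (N v))) u
    (vscal (tau u * cos (theta u)) (B u)).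
Proof.
  intros Hu; destruct Halpha as (_ & _ & Hframe).
  destruct (Hframe u Hu) as (_ & HT & HN & _).
  replace (vscal (tau u * cos (theta u)) (B u)) with
    (vadd (vadd (vscal (cos (theta u) * kappa u) (T u)) (vscal (sin (theta u)) (vscal (kappa u) (N u))))
          (vadd (vscal (- sin (theta u) * kappa u) (N u))
                (vscal (cos (theta u)) (vadd (vscal (- kappa u) (T u)) (vscal (tau u) (B u)))))).
  - apply has_vderiv_add.
    + apply (has_vderiv_scal (fun v => sin (theta v))); [|exact HT].
      apply is_derive_sin_comp, Htheta, Hu.
    + apply (has_vderiv_scal (fun v => cos (theta v))); [|exact HN].
      apply is_derive_cos_comp, Htheta, Hu.
  - destruct (T u), (N u), (B u); vec3_ring.
Qed.

Lemma mate_tangent u : I u ->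
  Tb u = vadd (vscal (sin (theta u)) (T u)) (vscal (cos (theta u)) (N u)).
Proof.
  intros Hu; destruct Hbeta as (_ & _ & Hframe).
  destruct (Hframe u Hu) as (Hbeta' & _).
  exact (has_vderiv_unique _ _ _ _ Hbeta' (Hmate u Hu)).
Qed.

Lemma mate_curvature_pos u : I u -> 0 < kb u.
Proof. intros Hu; destruct Hbeta as (_ & _ & Hframe); apply (Hframe u Hu). Qed.

Let c u := tau u * cos (theta u) / kb u.

Lemma mate_normal u : I u -> Nb u = vscal (c u) (B u).
Proof.
  intros Hu; destruct Hbeta as (_ & _ & Hframe).
  destruct (Hframe u Hu) as (_ & HTb & _).
  apply vscal_div; [apply Rgt_not_eq, mate_curvature_pos, Hu |].
  apply (has_vderiv_unique Tb u); [exact HTb |].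
  eapply has_vderiv_ext_on; [exact HI | exact Hu | | apply rotated_tangent_deriv, Hu].
  intros y Hy; symmetry; apply mate_tangent, Hy.
Qed.

Lemma mate_sign_sqr u : I u -> c u ^ 2 = 1.
Proof.
  intros Hu; destruct Halpha as (_ & _ & Hframe), Hbeta as (_ & _ & Hframe').
  destruct (Hframe u Hu) as (_ & _ & _ & _ & (_ & _ & HBB & _) & _).
  destruct (Hframe' u Hu) as (_ & _ & _ & _ & (_ & HNbNb & _) & _).
  rewrite mate_normal, dot_scall, dot_scalr, HBB in HNbNb by exact Hu.
  rewrite <- HNbNb; ring.
Qed.

Lemma mate_sign_deriv u : I u -> is_derive c u 0.
Proof.
  intros Hu; destruct Halpha as (_ & Htau & _), Hbeta as (Hkb & _).
  assert (Hc : ex_derive c u).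
  { unfold c; auto_derive; repeat split.
    - exact (Htau 1%nat u Hu).
    - exists (kappa u); apply Htheta, Hu.
    - exact (Hkb 1%nat u Hu).
    - apply Rgt_not_eq, mate_curvature_pos, Hu. }
  apply Derive_correct in Hc.
  rewrite <- (is_derive_sqr_one I c u _ HI Hu mate_sign_sqr Hc); exact Hc.
Qed.

Lemma mate_normal_deriv u : I u ->
  vadd (vscal (- kb u) (Tb u)) (vscal (tb u) (Bb u)) = vscal (- (c u * tau u)) (N u).
Proof.
  intros Hu; destruct Halpha as (_ & _ & Hframe), Hbeta as (_ & _ & Hframe').
  destruct (Hframe u Hu) as (_ & _ & _ & HB & _).
  destruct (Hframe' u Hu) as (_ & _ & HNb & _).
  transitivity (vadd (vscal 0 (B u)) (vscal (c u) (vscal (- tau u) (N u)))).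
  - apply (has_vderiv_unique Nb u); [exact HNb |].
    eapply has_vderiv_ext_on; [exact HI | exact Hu | |].
    + intros y Hy; symmetry; apply mate_normal, Hy.
    + apply has_vderiv_scal; [apply mate_sign_deriv, Hu | exact HB].
  - destruct (B u), (N u); vec3_ring.
Qed.

Lemma mate_torsion u : I u -> tb u = tau u * sin (theta u).
Proof.
  intros Hu; destruct Halpha as (_ & _ & Hframe), Hbeta as (_ & _ & Hframe').
  destruct (Hframe u Hu) as (_ & _ & _ & _ & Hortho & _).
  destruct (Hframe' u Hu) as (_ & _ & _ & _ & (_ & _ & HBbBb & _ & HTbBb & _ & HBb) & _).
  transitivity (dot (vadd (vscal (- kb u) (Tb u)) (vscal (tb u) (Bb u))) (Bb u)).
  { rewrite dot_addl, !dot_scall, HTbBb, HBbBb; ring. }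
  rewrite mate_normal_deriv, dot_scall, HBb, (mate_tangent u), (mate_normal u), cross_scalr,
    dot_scalr, pos_orthonormal_dot_normal_cross by assumption.
  transitivity (c u ^ 2 * (tau u * sin (theta u))); [ring |].
  rewrite mate_sign_sqr by exact Hu; ring.
Qed.

Lemma mate_curvature_sign u : I u -> kb u = c u * (tau u * cos (theta u)).
Proof.
  intros Hu; pose proof (mate_curvature_pos u Hu).
  replace (tau u * cos (theta u)) with (c u * kb u) by (unfold c; field; lra).
  transitivity (c u ^ 2 * kb u); [rewrite mate_sign_sqr by exact Hu |]; ring.
Qed.

Lemma mate_apparatus_norm u : I u -> kb u ^ 2 + tb u ^ 2 = tau u ^ 2.
Proof.
  intros Hu; rewrite mate_curvature_sign, mate_torsion by exact Hu.
  transitivity (tau u ^ 2 * (c u ^ 2 * cos (theta u) ^ 2 + sin (theta u) ^ 2)); [ring |].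
  rewrite mate_sign_sqr, <- !Rsqr_pow2, Rplus_comm, Rmult_1_l, sin2_cos2 by exact Hu; ring.
Qed.

Lemma mate_curvature u : I u -> kb u = Rabs (tau u * cos (theta u)).
Proof.
  intros Hu.
  assert (Hc : Rabs (c u) = 1).
  { assert (Hc2 : Rabs (c u) ^ 2 = 1)
      by (rewrite RPow_abs, mate_sign_sqr by exact Hu; apply Rabs_R1).
    pose proof (Rabs_pos (c u)); nra. }
  rewrite <- (Rabs_pos_eq (kb u)) by (apply Rlt_le, mate_curvature_pos, Hu).
  rewrite mate_curvature_sign, Rabs_mult, Hc by exact Hu; ring.
Qed.

Lemma mate_ratio_deriv u : I u ->
  is_derive (fun v => tb v / kb v) u (tau u * kappa u / (kb u * cos (theta u))).
Proof.
  intros Hu.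
  assert (Hnz : forall v, I v -> c v <> 0 /\ tau v <> 0 /\ cos (theta v) <> 0).
  { intros v Hv; pose proof (mate_curvature_pos v Hv); pose proof (mate_curvature_sign v Hv).
    repeat split; intros Z; rewrite Z in *; lra. }
  destruct (Hnz u Hu) as (Hc & Htau & Hcos).
  replace (tau u * kappa u / (kb u * cos (theta u)))
    with (0 * tan (theta u) + c u * ((tan (theta u) ^ 2 + 1) * kappa u)).
  - apply (is_derive_ext_on I (fun v => c v * tan (theta v))); auto.
    + intros v Hv; destruct (Hnz v Hv) as (Hc' & Htau' & Hcos').
      rewrite mate_torsion, mate_curvature_sign by exact Hv.
      unfold tan; field_simplify_eq; [|auto].
      rewrite mate_sign_sqr by exact Hv; ring.
    + apply (is_derive_Rmult c (fun v => tan (theta v))); [apply mate_sign_deriv, Hu |].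
      apply (is_derive_tan_comp theta); [exact Hcos | apply Htheta, Hu].
  - rewrite mate_curvature_sign by exact Hu.
    unfold tan; field_simplify_eq; [|auto].
    rewrite mate_sign_sqr by exact Hu.
    transitivity (kappa u * (sin (theta u) ^ 2 + cos (theta u) ^ 2)); [ring |].
    rewrite <- !Rsqr_pow2, sin2_cos2; ring.
Qed.

End OsculatingMate.

Lemma pow2_sqrt_cases (x : R) : x = sqrt (x ^ 2) \/ x = - sqrt (x ^ 2).
Proof.
  destruct (Rle_or_lt 0 x) as [Hx | Hx].
  - left; rewrite sqrt_pow2; auto.
  - right; replace (x ^ 2) with ((- x) ^ 2) by ring; rewrite sqrt_pow2; lra.
Qed.

Theorem theorem4
  (I : R -> Prop)
  (alpha T N B : R -> vec3) (kappa tau : R -> R)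
  (beta : R -> vec3) (x1 x2 : R -> R)
  (Tb Nb Bb : R -> vec3) (kb tb : R -> R)
  (theta : R -> R) :
  is_open_interval I ->
  (* alpha : unit speed Frenet curve with apparatus {T,N,B,kappa,tau}, kappa > 0 *)
  frenet_curve I alpha T N B kappa tau ->
  (* beta : osculating mate of alpha *)
  smooth_on I x1 -> smooth_on I x2 ->
  (forall s, I s -> x1 s ^ 2 + x2 s ^ 2 = 1) ->
  (forall s, I s -> has_vderiv beta s (vadd (vscal (x1 s) (T s)) (vscal (x2 s) (N s)))) ->
  (forall s, I s -> exists v,
      has_vderiv (fun u => vadd (vscal (x1 u) (T u)) (vscal (x2 u) (N u))) s v /\
      dot v (T s) = 0 /\ dot v (N s) = 0) ->
  (* beta is a unit speed Frenet curve with apparatus {Tb,Nb,Bb,kb,tb} *)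
  frenet_curve I beta Tb Nb Bb kb tb ->
  (* theta : antiderivative of kappa with beta' = sin(theta) T + cos(theta) N *)
  (forall s, I s -> is_derive theta s (kappa s)) ->
  (forall s, I s ->
      has_vderiv beta s (vadd (vscal (sin (theta s)) (T s)) (vscal (cos (theta s)) (N s)))) ->
  forall s (eps1 : R), I s ->
    (eps1 = 1 \/ eps1 = -1) -> 0 < eps1 * tau s * cos (theta s) ->
    kappa s = eps1 * kb s ^ 2 / (kb s ^ 2 + tb s ^ 2) * Derive (fun u => tb u / kb u) s /\
    (tau s = sqrt (kb s ^ 2 + tb s ^ 2) \/ tau s = - sqrt (kb s ^ 2 + tb s ^ 2)).
Proof.
  intros HI Halpha _ _ _ _ _ Hbeta Htheta Hmate s eps1 Hs Heps Hsign.
  pose proof (mate_apparatus_norm HI Halpha Hbeta Htheta Hmate s Hs) as Hnorm.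
  pose proof (mate_curvature HI Halpha Hbeta Htheta Hmate s Hs) as Hkb.
  pose proof (mate_ratio_deriv HI Halpha Hbeta Htheta Hmate s Hs) as Hratio.
  assert (Hkb_eps : kb s = eps1 * (tau s * cos (theta s))).
  { rewrite Hkb; destruct Heps; subst eps1.
    - rewrite Rabs_pos_eq; lra.
    - rewrite Rabs_left; lra. }
  replace (Derive (fun u => tb u / kb u) s) with (tau s * kappa s / (kb s * cos (theta s)))
    by (symmetry; exact (is_derive_unique _ _ _ Hratio)).
  rewrite Hnorm.
  split.
  - assert (tau s <> 0 /\ cos (theta s) <> 0) as [Htau Hcos]
      by (split; intros Z; rewrite Z in Hsign; lra).
    rewrite Hkb_eps; destruct Heps; subst eps1; field; auto.
  - apply pow2_sqrt_cases.
Qed.
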